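(* Under the same setting as follows — $0<\gamma\le L$, $\alpha\in(0,2/L)$, $\mathcal{X}\subseteq\mathbb{R}^M$ nonempty closed convex, for each $t\ge0$ a nonempty closed convex $\mathcal{X}_t\subseteq\mathcal{X}$ and a differentiable $f_t:\mathbb{R}^M\to\mathbb{R}$ that is $L$-smooth and $\gamma$-strongly convex on $\mathcal{X}$, $\mathbf{x}_t^*:=\arg\min_{\mathbf{x}\in\mathcal{X}_t}f_t(\mathbf{x})$, $r_t:=\|\mathbf{x}_{t-1}^*-\mathbf{x}_t^*\|$, $\mathbf{x}_0\in\mathcal{X}_0$, arbitrary error vectors $\mathbf{e}_t\in\mathbb{R}^M$, and iterates $\mathbf{x}_t=\mathrm{proj}_{\mathcal{X}_t}\{\mathbf{x}_{t-1}-\alpha(\nabla f_t(\mathbf{x}_{t-1})+\mathbf{e}_t)\}$ for $t\ge1$ — define $\rho:=\max\{|1-\alpha\gamma|,|1-\alpha L|\}$, the path length $\omega_T:=\sum_{t=1}^T r_t$ and the cumulative gradient error $E_T:=\sum_{t=1}^T\|\mathbf{e}_t\|$. Then for every $T\ge1$, $$\sum_{t=1}^T\|\mathbf{x}_t-\mathbf{x}_t^*\|\le\frac{1}{1-\rho}\Big[\rho\|\mathbf{x}_0-\mathbf{x}_0^*\|+\rho\,\omega_T+\alpha E_T\Big].$$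
   Context: $\mathrm{proj}_{\mathcal{X}}\{\mathbf{y}\}:=\arg\min_{\mathbf{x}\in\mathcal{X}}\|\mathbf{x}-\mathbf{y}\|^2$ denotes Euclidean projection; $\|\cdot\|$ is the Euclidean norm. Note $\rho<1$ under the stated assumptions. *)

From HB Require Import structures.
From mathcomp Require Import all_boot all_order all_algebra.
From mathcomp Require Import all_classical all_reals all_analysis.
Set Implicit Arguments. Unset Strict Implicit. Unset Printing Implicit Defensive.
Import Order.TTheory GRing.Theory Num.Theory.
Import numFieldNormedType.Exports.
Local Open Scope classical_set_scope.
Local Open Scope ring_scope.

Section Defs.
Variables (R : realType) (M : nat).
Local Notation V := 'rV[R]_M.

Definition dotv (u v : V) : R := \sum_(i < M) u 0 i * v 0 i.
Definition enorm (u : V) : R := Num.sqrt (\sum_(i < M) u 0 i ^+ 2).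

Definition convexS (C : set V) : Prop :=
  forall a b, C a -> C b -> forall l : R, 0 <= l <= 1 ->
    C (l *: a + (1 - l) *: b).

Definition is_gradient (f : V -> R) (g : V -> V) : Prop :=
  forall x, differentiable f x /\ forall h, 'd f x h = dotv (g x) h.

Definition L_smooth_on (X : set V) (g : V -> V) (L : R) : Prop :=
  forall x y, X x -> X y -> enorm (g x - g y) <= L * enorm (x - y).

Definition strongly_convex_on (X : set V) (f : V -> R) (g : V -> V) (gam : R)
  : Prop :=
  forall x y, X x -> X y ->
    f x + dotv (g x) (y - x) + gam / 2 * enorm (y - x) ^+ 2 <= f y.

Definition is_argmin (C : set V) (f : V -> R) (xs : V) : Prop :=
  C xs /\ forall z, C z -> f xs <= f z.

Definition is_proj (C : set V) (y p : V) : Prop :=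
  C p /\ forall z, C z -> enorm (p - y) <= enorm (z - y).
End Defs.

From HB Require Import structures.
From mathcomp Require Import all_boot all_order all_algebra.
From mathcomp Require Import all_classical all_reals all_analysis.
From mathcomp Require Import ring lra.
Import Order.TTheory GRing.Theory Num.Theory.
Import numFieldNormedType.Exports.
Local Open Scope classical_set_scope.
Local Open Scope ring_scope.
Set Implicit Arguments. Unset Strict Implicit. Unset Printing Implicit Defensive.

(* The key estimate is a contraction of the gradient step
   T v = v - alpha g v that only uses smoothness and strong convexity ON X:
   for a, b, p, q in X,
       <p - q, T a - T b> <= rho |a - b| |p - q|          (step_contraction).
   It comes from comparing the quadratic upper model (descent lemma) and the
   strong convexity lower model of f at the two points mid(x, y) -+ s w
   (centered_gradient_bound).  These points lie in X once x, y are close and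
   pulled slightly towards the midpoint of p and q; so the segment [b, a] is
   chopped into short pulled pieces, the estimates are telescoped, and the
   pull is sent to 0.  Together with the variational inequalities of the
   projection and of the constrained minimizer this gives the one-step bound
       |x_t - x*_t| <= rho |x_{t-1} - x*_t| + alpha |e_t|   (one_step_bound);
   the triangle inequality through x*_{t-1} and the summation of the resulting
   linear recursion (sum_linear_recursion) yield the corollary. *)

Section Euclidean.
Variables (R : realType) (M : nat).
Local Notation V := 'rV[R]_M.
Implicit Types u v w : V.

Lemma dotvC u v : dotv u v = dotv v u.
Proof. by apply: eq_bigr => i _; rewrite mulrC. Qed.

Lemma dotvDl u v w : dotv (u + v) w = dotv u w + dotv v w.
Proof. by rewrite /dotv -big_split; apply: eq_bigr => i _; rewrite !mxE mulrDl. Qed.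

Lemma dotvZl (k : R) u v : dotv (k *: u) v = k * dotv u v.
Proof. by rewrite /dotv mulr_sumr; apply: eq_bigr => i _; rewrite !mxE mulrA. Qed.

Lemma dotvNl u v : dotv (- u) v = - dotv u v.
Proof. by rewrite -scaleN1r dotvZl mulN1r. Qed.

Lemma dotvBl u v w : dotv (u - v) w = dotv u w - dotv v w.
Proof. by rewrite dotvDl dotvNl. Qed.

Lemma dotvDr u v w : dotv w (u + v) = dotv w u + dotv w v.
Proof. by rewrite dotvC dotvDl !(dotvC w). Qed.

Lemma dotvZr (k : R) u v : dotv v (k *: u) = k * dotv v u.
Proof. by rewrite dotvC dotvZl dotvC. Qed.

Lemma dotvNr u v : dotv v (- u) = - dotv v u.
Proof. by rewrite dotvC dotvNl dotvC. Qed.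

Lemma dotvBr u v w : dotv w (u - v) = dotv w u - dotv w v.
Proof. by rewrite dotvDr dotvNr. Qed.

Lemma dotv0r u : dotv u 0 = 0.
Proof. by rewrite -(scale0r 0) dotvZr mul0r. Qed.

Lemma dotv_ge0 u : 0 <= dotv u u.
Proof. by apply: sumr_ge0 => i _; rewrite -expr2 sqr_ge0. Qed.

Lemma enorm_sq u : enorm u ^+ 2 = dotv u u.
Proof.
rewrite /enorm sqr_sqrtr; last by apply: sumr_ge0 => i _; rewrite sqr_ge0.
by apply: eq_bigr => i _; rewrite expr2.
Qed.

Lemma enorm_ge0 u : 0 <= enorm u.
Proof. exact: sqrtr_ge0. Qed.

Lemma enormE u : enorm u = Num.sqrt (dotv u u).
Proof. by rewrite /enorm; congr Num.sqrt; apply: eq_bigr => i _; rewrite expr2. Qed.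

Lemma enormZ (k : R) u : enorm (k *: u) = `|k| * enorm u.
Proof.
rewrite !enormE dotvZl dotvZr mulrA sqrtrM; last by rewrite -expr2 sqr_ge0.
by rewrite -expr2 sqrtr_sqr.
Qed.

Lemma enormN u : enorm (- u) = enorm u.
Proof. by rewrite -scaleN1r enormZ normrN normr1 mul1r. Qed.

Lemma enorm_eq0 u : enorm u = 0 -> u = 0.
Proof.
move=> u0; have /eqP : dotv u u = 0 by rewrite -enorm_sq u0 expr0n.
rewrite psumr_eq0 => [/allP uu0|i _]; last by rewrite -expr2 sqr_ge0.
apply/matrixP => i j; rewrite (ord1 i) mxE.
by have /implyP/(_ isT) := uu0 j (mem_index_enum _); rewrite mulf_eq0 orbb => /eqP.
Qed.

Lemma cauchy_schwarz u v : dotv u v <= enorm u * enorm v.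
Proof.
have [/enorm_eq0 ->|un0] := eqVneq (enorm u) 0.
  by rewrite dotvC dotv0r mulr_ge0 ?enorm_ge0.
have [/enorm_eq0 ->|vn0] := eqVneq (enorm v) 0.
  by rewrite dotv0r mulr_ge0 ?enorm_ge0.
have up : 0 < enorm u by rewrite lt_def un0 enorm_ge0.
have vp : 0 < enorm v by rewrite lt_def vn0 enorm_ge0.
have := dotv_ge0 (enorm v *: u - enorm u *: v).
rewrite !(dotvBl, dotvBr, dotvZl, dotvZr) -!enorm_sq (dotvC v u) => h.
have uvp : 0 < enorm u * enorm v by rewrite mulr_gt0.
rewrite -subr_ge0 -(pmulr_rge0 _ uvp).
move: h uvp; move: (enorm u) (enorm v) (dotv u v) => a b c; nra.
Qed.

Lemma cauchy_schwarz_abs u v : `|dotv u v| <= enorm u * enorm v.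
Proof.
rewrite ler_norml cauchy_schwarz andbT lerNl -dotvNl.
by apply: le_trans (cauchy_schwarz _ _) _; rewrite enormN.
Qed.

Lemma enormD u v : enorm (u + v) <= enorm u + enorm v.
Proof.
rewrite -(ler_pXn2r (n:=2)) // ?nnegrE ?addr_ge0 ?enorm_ge0 //.
rewrite enorm_sq dotvDl !dotvDr -!enorm_sq (dotvC v u).
have := cauchy_schwarz u v; nra.
Qed.

Lemma enorm_triangle u v w : enorm (u - w) <= enorm (u - v) + enorm (v - w).
Proof. by apply: le_trans (enormD _ _); rewrite addrA subrK. Qed.

Lemma dotv_combr (u d w : V) (a b : R) :
  dotv u (a *: d + b *: w) = a * dotv u d + b * dotv u w.
Proof. by rewrite dotvDr !dotvZr. Qed.

Lemma dotv_comb2 (d w : V) (a b : R) :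
  dotv (a *: d + b *: w) (a *: d + b *: w)
  = a ^+ 2 * dotv d d + 2 * a * b * dotv d w + b ^+ 2 * dotv w w.
Proof. rewrite !(dotvDl, dotvDr, dotvZl, dotvZr) (dotvC w d); ring. Qed.

End Euclidean.

Section Descent.
Variables (R : realType) (M : nat).
Local Notation V := 'rV[R]_M.

Lemma segment_in (C : set V) (y z : V) (t : R) :
  convexS C -> C y -> C z -> 0 <= t <= 1 -> C (t *: (z - y) + y).
Proof.
move=> cC Cy Cz t01.
have -> : t *: (z - y) + y = t *: z + (1 - t) *: y.
  by apply/matrixP => i j; rewrite !mxE; ring.
exact: cC.
Qed.

Lemma line_derive (f : V -> R) (u y : V) (t : R) :
  differentiable f (t *: u + y) ->
  is_derive t 1 (fun s => f (s *: u + y)) ('d f (t *: u + y) u).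
Proof.
move=> df.
have quot : (fun h : R => h^-1 *: (f ((h *: 1 + t) *: u + y) - f (t *: u + y)))
    = (fun h : R => h^-1 *: (f (h *: u + (t *: u + y)) - f (t *: u + y))).
  by apply: funext => h /=; rewrite scaler1 scalerDl addrA.
have du : derivable f (t *: u + y) u by apply: diff_derivable.
apply: DeriveDef; first by rewrite /derivable quot.
by rewrite /derive quot -/(derive f _ u) deriveE.
Qed.

Lemma quad_derive (a b t : R) :
  is_derive t 1 (fun s : R => a * s + b * s ^+ 2) (a + b * (2 * t)).
Proof.
by apply: is_derive_eq; rewrite -[b *: _]/(b * _) -[a%:A]/(a * 1) -[t%:A]/(t * 1); ring.
Qed.

Variables (f : V -> R) (g : V -> V) (X : set V) (L : R).
Hypotheses (cX : convexS X) (gf : is_gradient f g) (Ls : L_smooth_on X g L).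

(* Descent lemma: an L-smooth function lies below its tangent quadratic
   upper model on X.  Mean value theorem along the segment [y, z]. *)
Lemma descent y z : X y -> X z ->
  f z <= f y + dotv (g y) (z - y) + L / 2 * enorm (z - y) ^+ 2.
Proof.
move=> Xy Xz; set u := z - y; rewrite enorm_sq.
set a := dotv (g y) u; set b := L / 2 * dotv u u.
pose phi s := f (s *: u + y) - (a * s + b * s ^+ 2).
pose dphi s := 'd f (s *: u + y) u - (a + b * (2 * s)).
have phi' (s : R) : is_derive s (1 : R) phi (dphi s).
  apply: is_deriveB; last exact: quad_derive.
  by apply: line_derive; case: (gf (s *: u + y)).
have [c] : exists2 c, c \in `]0, 1[%R & phi 1 - phi 0 = dphi c * (1 - 0).
  apply: MVT => //; apply: derivable_within_continuous => s _; exact: ex_derive.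
rewrite in_itv /= => /andP[c0 c1].
have Xc : X (c *: u + y) by apply: segment_in; rewrite // ltW // ltW.
have dphi_le0 : dphi c <= 0.
  rewrite /dphi; have [_ ->] := gf (c *: u + y).
  have : dotv (g (c *: u + y) - g y) u <= L * c * dotv u u.
    apply: le_trans (cauchy_schwarz _ _) _.
    have := Ls Xc Xy; rewrite addrK enormZ gtr0_norm // => gLip.
    apply: le_trans (ler_wpM2r (enorm_ge0 _) gLip) _.
    by rewrite -enorm_sq mulrA expr2 mulrA.
  have -> : b * (2 * c) = L * c * dotv u u by rewrite /b; field.
  by rewrite dotvBl -/a; lra.
move=> mvt; have : phi 1 <= phi 0 by rewrite -subr_le0 mvt subr0 mulr1.
by rewrite /phi scale1r scale0r add0r subrK expr1n expr0n /= mulr0 !mulr1; lra.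
Qed.

End Descent.

Section Variational.
Variables (R : realType) (M : nat).
Local Notation V := 'rV[R]_M.

Lemma nonneg_of_small_quadratic (A B : R) : 0 <= B ->
  (forall l : R, 0 < l -> l <= 1 -> 0 <= l * A + l ^+ 2 * B) -> 0 <= A.
Proof.
move=> B0 H; rewrite leNgt; apply/negP => A_lt0.
pose l := Num.min 1 (- A / (B + 1)).
have B1 : 0 < B + 1 by lra.
have l0 : 0 < l by rewrite lt_min ltr01 /= divr_gt0 // oppr_gt0.
have l1 : l <= 1 by rewrite ge_min lexx.
have lB : l * B < - A.
  have : l * (B + 1) <= - A by rewrite -ler_pdivlMr // ge_min lexx orbT.
  by apply: lt_le_trans; rewrite ltr_pM2l //; lra.
have : 0 <= l * (A + l * B) by rewrite mulrDr mulrA -expr2; exact: H.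
by rewrite pmulr_rge0 //; lra.
Qed.

Lemma proj_variational (C : set V) (y p : V) : convexS C -> is_proj C y p ->
  forall z, C z -> 0 <= dotv (p - y) (z - p).
Proof.
move=> cC [Cp p_min] z Cz.
apply: (nonneg_of_small_quadratic (B := dotv (z - p) (z - p) / 2)).
  by rewrite divr_ge0 // dotv_ge0.
move=> l l0 l1.
have Cq : C (l *: (z - p) + p) by apply: segment_in; rewrite // ltW.
have := p_min _ Cq; rewrite -(ler_pXn2r (n := 2)) ?nnegrE ?enorm_ge0 //.
have -> : l *: (z - p) + p - y = 1 *: (p - y) + l *: (z - p).
  by apply/matrixP => i j; rewrite !mxE; ring.
rewrite !enorm_sq dotv_comb2.
move: (dotv (p - y) (z - p)) (dotv (z - p) (z - p)) => A D.
by rewrite expr1n !mul1r; nra.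
Qed.

Lemma argmin_variational (f : V -> R) (g : V -> V) (X C : set V) (L : R) xs :
  convexS X -> is_gradient f g -> L_smooth_on X g L -> 0 <= L ->
  convexS C -> C `<=` X -> is_argmin C f xs ->
  forall z, C z -> 0 <= dotv (g xs) (z - xs).
Proof.
move=> cX gf Ls L0 cC CX [Cx x_min] z Cz.
apply: (nonneg_of_small_quadratic (B := L / 2 * dotv (z - xs) (z - xs))).
  by rewrite mulr_ge0 ?divr_ge0 ?dotv_ge0.
move=> l l0 l1.
have Cq : C (l *: (z - xs) + xs) by apply: segment_in; rewrite // ltW.
have := descent cX gf Ls (CX _ Cx) (CX _ Cq).
rewrite addrK dotvZr enorm_sq dotvZl dotvZr.
have := x_min _ Cq.
move: (dotv (g xs) (z - xs)) (dotv (z - xs) (z - xs)) => A D.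
by rewrite expr2; nra.
Qed.

(* Adding the variational inequalities at two projections p1, p2 of u1, u2:
   |p1 - p2|^2 <= <u1 - u2, p1 - p2>. *)
Lemma firm_nonexpansive (p1 p2 u1 u2 : V) :
  0 <= dotv (p1 - u1) (p2 - p1) -> 0 <= dotv (p2 - u2) (p1 - p2) ->
  dotv (p1 - p2) (p1 - p2) <= dotv (u1 - u2) (p1 - p2).
Proof.
have -> : p2 - p1 = - (p1 - p2) by rewrite opprB.
have -> : p2 - u2 = (p1 - u1) - (p1 - p2) + (u1 - u2).
  by apply/matrixP => i j; rewrite !mxE; ring.
move: (p1 - u1) (p1 - p2) (u1 - u2) => a w U.
by rewrite dotvNr !dotvDl dotvNl; lra.
Qed.

End Variational.

Lemma le_of_le_add_eps (R : realFieldType) (A B K : R) :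
  (forall eps, 0 < eps < 1 -> A <= B + eps * K) -> A <= B.
Proof.
move=> H; apply/ler_addgt0Pr => e e0.
pose eps := Num.min (1/2) (e / (`|K| + 1)).
have K1 : 0 < `|K| + 1 by rewrite ltr_wpDl.
have eps0 : 0 < eps by rewrite lt_min divr_gt0 //= divr_gt0.
have eps1 : eps < 1 by rewrite gt_min; apply/orP; left; lra.
apply: le_trans (H eps _) _; first by rewrite eps0.
rewrite lerD2l; apply: le_trans (ler_norm _) _.
have : eps * (`|K| + 1) <= e by rewrite -ler_pdivlMr // ge_min lexx orbT.
by rewrite normrM gtr0_norm // mulrDr mulr1; lra.
Qed.

Section Contraction.
Variables (R : realType) (M : nat).
Local Notation V := 'rV[R]_M.
Variables (f : V -> R) (g : V -> V) (X : set V) (L gam alpha : R).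
Hypotheses (cX : convexS X) (gf : is_gradient f g) (Ls : L_smooth_on X g L)
  (SC : strongly_convex_on X f g gam) (alpha0 : 0 < alpha).

Let rho : R := Num.max `|1 - alpha * gam| `|1 - alpha * L|.

Local Notation step v := (v - alpha *: g v).

(* Comparing the quadratic upper model (descent lemma) with the strong
   convexity lower model at the two points mid(x, y) -+ s w, where
   s = |x - y| / (2 |w|), bounds the centered gradient difference
   in the direction w. *)
Lemma centered_gradient_bound x y w : X x -> X y -> 0 < enorm w ->
  X ((1/2) *: (x + y) - (enorm (x - y) / (2 * enorm w)) *: w) ->
  X ((1/2) *: (x + y) + (enorm (x - y) / (2 * enorm w)) *: w) ->
  dotv w (((L + gam) / 2) *: (x - y) - (g x - g y))
    <= (L - gam) / 2 * enorm (x - y) * enorm w.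
Proof.
move=> Xx Xy wpos.
set s := enorm (x - y) / (2 * enorm w).
set P := (1/2) *: (x + y) - s *: w; set Q := (1/2) *: (x + y) + s *: w.
move=> XP XQ.
have [d0|dn0] := eqVneq (enorm (x - y)) 0.
  have exy : x = y by apply/eqP; rewrite -subr_eq0; apply/eqP; exact: enorm_eq0.
  by rewrite d0 {1 2}exy !subrr scaler0 subr0 dotv0r mulr0 mul0r.
have dpos : 0 < enorm (x - y) by rewrite lt_def dn0 enorm_ge0.
have h1 := SC Xx XP; have h2 := descent cX gf Ls Xy XP.
have h3 := SC Xy XQ; have h4 := descent cX gf Ls Xx XQ.
have eP1 : P - x = (-(1/2)) *: (x - y) + (- s) *: w.
  by apply/matrixP => i j; rewrite !mxE; field.
have eP2 : P - y = (1/2) *: (x - y) + (- s) *: w.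
  by apply/matrixP => i j; rewrite !mxE; field.
have eQ1 : Q - y = (1/2) *: (x - y) + s *: w.
  by apply/matrixP => i j; rewrite !mxE; field.
have eQ2 : Q - x = (-(1/2)) *: (x - y) + s *: w.
  by apply/matrixP => i j; rewrite !mxE; field.
rewrite eP1 in h1; rewrite eP2 in h2; rewrite eQ1 in h3; rewrite eQ2 in h4.
rewrite dotvBr dotvZr (dotvC w (x - y)) dotvBr (dotvC w (g x)) (dotvC w (g y)).
move: h1 h2 h3 h4; rewrite !enorm_sq !dotv_comb2 !dotv_combr -!enorm_sq.
have es : s * (2 * enorm w) = enorm (x - y).
  by rewrite /s divfK // mulf_neq0 // gt_eqF.
move: (f x) (f y) (f P) (f Q) => fx fy fP fQ.
set D := enorm (x - y) in dpos es *; set W := enorm w in wpos es *.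
move: (dotv (g x) (x - y)) (dotv (g x) w) (dotv (g y) (x - y)) (dotv (g y) w)
  (dotv (x - y) w) => gxd gxw gyd gyw dw h1 h2 h3 h4.
(* summing the four model inequalities *)
have sum4 : 2 * s * ((L + gam) / 2 * dw - (gxw - gyw))
    <= (L - gam) * (D ^+ 2 / 4 + s ^+ 2 * W ^+ 2) by nra.
set T := (L + gam) / 2 * dw - (gxw - gyw) in sum4 *.
rewrite -(ler_pM2l dpos).
have := ler_wpM2r (ltW wpos) sum4.
have -> : 2 * s * T * W = D * T by rewrite -es; ring.
by have -> : (L - gam) * (D ^+ 2 / 4 + s ^+ 2 * W ^+ 2) * W
  = D * ((L - gam) / 2 * D * W) by rewrite -es; field.
Qed.

Lemma rho_ge0 : 0 <= rho.
Proof. by rewrite le_max normr_ge0. Qed.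

Lemma rho_split :
  `|1 - alpha * ((L + gam) / 2)| + alpha * ((L - gam) / 2) <= rho.
Proof.
have [c_le|c_gt] := lerP 0 (1 - alpha * ((L + gam) / 2)).
  rewrite (ger0_norm c_le).
  have -> : 1 - alpha * ((L + gam) / 2) + alpha * ((L - gam) / 2)
    = 1 - alpha * gam by field.
  by apply: le_trans (ler_norm _) _; rewrite le_max lexx.
rewrite (ltr0_norm c_gt).
have -> : - (1 - alpha * ((L + gam) / 2)) + alpha * ((L - gam) / 2)
  = - (1 - alpha * L) by field.
by apply: le_trans (ler_norm _) _; rewrite normrN le_max lexx orbT.
Qed.

(* Splitting x - y - alpha (g x - g y) = (1 - alpha c)(x - y)
   + alpha (c (x - y) - (g x - g y)) turns the centered bound into the
   contraction factor rho, in the direction w. *)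
Lemma directional_contraction x y w : X x -> X y -> 0 < enorm w ->
  X ((1/2) *: (x + y) - (enorm (x - y) / (2 * enorm w)) *: w) ->
  X ((1/2) *: (x + y) + (enorm (x - y) / (2 * enorm w)) *: w) ->
  dotv w ((x - y) - alpha *: (g x - g y)) <= rho * enorm (x - y) * enorm w.
Proof.
move=> Xx Xy wpos XP XQ.
have centered := centered_gradient_bound Xx Xy wpos XP XQ.
set c := (L + gam) / 2 in centered.
have -> : (x - y) - alpha *: (g x - g y)
    = (1 - alpha * c) *: (x - y) + alpha *: (c *: (x - y) - (g x - g y)).
  by apply/matrixP => i j; rewrite !mxE; ring.
rewrite dotv_combr.
set N := enorm (x - y) * enorm w.
have N0 : 0 <= N by rewrite mulr_ge0 ?enorm_ge0.
have first : (1 - alpha * c) * dotv w (x - y) <= `|1 - alpha * c| * N.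
  apply: le_trans (ler_norm _) _; rewrite normrM; apply: ler_wpM2l => //.
  by rewrite dotvC cauchy_schwarz_abs.
have second : alpha * dotv w (c *: (x - y) - (g x - g y))
    <= alpha * ((L - gam) / 2) * N.
  by rewrite -mulrA; apply: ler_wpM2l; [exact: ltW | rewrite /N mulrA].
have := ler_wpM2r N0 rho_split; rewrite mulrDl -mulrA.
by move: first second; rewrite -/c /N; lra.
Qed.

Lemma step_dot_sub (w x y : V) :
  dotv w (step x) - dotv w (step y) = dotv w ((x - y) - alpha *: (g x - g y)).
Proof. by rewrite -dotvBr; congr dotv; apply/matrixP => i j; rewrite !mxE; ring. Qed.

Lemma step_dot_lipschitz (w u v : V) : X u -> X v ->
  dotv w ((u - v) - alpha *: (g u - g v))
    <= enorm w * ((1 + alpha * L) * enorm (u - v)).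
Proof.
move=> Xu Xv; apply: le_trans (cauchy_schwarz _ _) _.
apply: ler_wpM2l; first exact: enorm_ge0.
apply: le_trans (enormD _ _) _.
rewrite enormN enormZ gtr0_norm //.
have : alpha * enorm (g u - g v) <= alpha * (L * enorm (u - v)).
  by apply: ler_wpM2l; [exact: ltW | exact: Ls].
lra.
Qed.

(* Points of X pulled a fraction eps towards m have room eps/2 in the
   direction w on both sides, which makes the cross points of
   [directional_contraction] available along short pulled segments. *)
Section Pulled.
Variables (p q : V).
Hypotheses (Xp : X p) (Xq : X q).
Let w := p - q.
Let m := (1/2) *: (p + q).

Lemma pulled_in z eps tau : X z -> 0 < eps < 1 -> `|tau| <= eps / 2 ->
  X ((1 - eps) *: z + eps *: m + tau *: w).
Proof.
move=> Xz /andP[e0 e1]; rewrite ler_norml => /andP[tau_lo tau_hi].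
set be := (eps / 2 + tau) / eps.
have be0 : 0 <= be by rewrite /be divr_ge0 //; [lra | exact: ltW].
have be1 : be <= 1 by rewrite ler_pdivrMr //; lra.
have Xr : X (be *: p + (1 - be) *: q) by apply: cX => //; rewrite be0 be1.
have -> : (1 - eps) *: z + eps *: m + tau *: w
    = eps *: (be *: p + (1 - be) *: q) + (1 - eps) *: z.
  by apply/matrixP => i j; rewrite /m /w /be !mxE; field; exact: lt0r_neq0.
by apply: cX => //; rewrite (ltW e0) (ltW e1).
Qed.

Local Notation pull eps a b l := ((1 - eps) *: (l *: (a - b) + b) + eps *: m).

Lemma pull_in a b eps l : X a -> X b -> 0 < eps < 1 -> 0 <= l <= 1 ->
  X (pull eps a b l).
Proof.
move=> Xa Xb eps01 l01; have /andP[e0 _] := eps01.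
have := @pulled_in _ _ 0 (segment_in cX Xb Xa l01) eps01.
by rewrite scale0r addr0 normr0; apply; rewrite divr_ge0 // ltW.
Qed.

Lemma pulled_piece a b eps l1 l2 : X a -> X b -> 0 < enorm w -> 0 < eps < 1 ->
  0 <= l1 -> l1 <= l2 -> l2 <= 1 ->
  (1 - eps) * (l2 - l1) * enorm (a - b) <= eps * enorm w ->
  dotv w (step (pull eps a b l2)) - dotv w (step (pull eps a b l1))
    <= rho * ((1 - eps) * (l2 - l1) * enorm (a - b)) * enorm w.
Proof.
move=> Xa Xb wpos eps01 l1_ge0 l12 l2_le1 short; have /andP[e0 e1] := eps01.
set d := (1 - eps) * (l2 - l1) * enorm (a - b).
have d_ge0 : 0 <= d by rewrite !mulr_ge0 ?enorm_ge0 // subr_ge0 // ltW.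
have d_eq : enorm (pull eps a b l2 - pull eps a b l1) = d.
  have -> : pull eps a b l2 - pull eps a b l1 = ((1 - eps) * (l2 - l1)) *: (a - b).
    by apply/matrixP => i j; rewrite !mxE; ring.
  by rewrite enormZ ger0_norm // mulr_ge0 // subr_ge0 // ltW.
have mid tau : (1/2) *: (pull eps a b l2 + pull eps a b l1) + tau *: w
    = (1 - eps) *: (((l1 + l2) / 2) *: (a - b) + b) + eps *: m + tau *: w.
  by apply/matrixP => i j; rewrite !mxE; field.
have room : `|d / (2 * enorm w)| <= eps / 2.
  rewrite ger0_norm; last by rewrite divr_ge0 // mulr_ge0 // enorm_ge0.
  rewrite ler_pdivrMr ?mulr_gt0 //.
  by have -> : eps / 2 * (2 * enorm w) = eps * enorm w by field.
have Xmid : X (((l1 + l2) / 2) *: (a - b) + b).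
  by apply: segment_in => //; apply/andP; split; lra.
rewrite step_dot_sub -d_eq; apply: directional_contraction => //.
- by apply: pull_in => //; apply/andP; split; lra.
- by apply: pull_in => //; apply/andP; split; lra.
- by rewrite -scaleNr mid; apply: pulled_in; rewrite // normrN d_eq.
- by rewrite mid; apply: pulled_in; rewrite // d_eq.
Qed.

(* Chopping the pulled segment into n short pieces and telescoping. *)
Lemma pulled_contraction a b eps : X a -> X b -> 0 < enorm w -> 0 < eps < 1 ->
  dotv w (step (pull eps a b 1)) - dotv w (step (pull eps a b 0))
    <= rho * ((1 - eps) * enorm (a - b)) * enorm w.
Proof.
move=> Xa Xb wpos eps01; have /andP[e0 e1] := eps01.
set n := (Num.truncn (enorm (a - b) / (eps * enorm w))).+1.
have n_gt : enorm (a - b) / (eps * enorm w) < n%:R by apply: truncnS_gt.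
have n0 : 0 < n%:R :> R by rewrite ltr0n.
pose F (i : nat) := dotv w (step (pull eps a b (i%:R / n%:R))).
have F_piece i : (i < n)%N ->
    F i.+1 - F i <= rho * ((1 - eps) * enorm (a - b)) * enorm w / n%:R.
  move=> lt_in; have lt_in' : i%:R + 1 <= n%:R :> R by rewrite natr1 ler_nat.
  have -> : rho * ((1 - eps) * enorm (a - b)) * enorm w / n%:R
      = rho * ((1 - eps) * (i.+1%:R / n%:R - i%:R / n%:R) * enorm (a - b))
        * enorm w.
    by rewrite -natr1; field; exact: lt0r_neq0.
  apply: pulled_piece; rewrite // ?divr_ge0 // ?ler_pM2r ?invr_gt0 ?ler_nat //.
    by rewrite ler_pdivrMr // mul1r ler_nat.
  have -> : (1 - eps) * (i.+1%:R / n%:R - i%:R / n%:R) * enorm (a - b)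
      = (1 - eps) * (enorm (a - b) / n%:R).
    by rewrite -natr1; field; exact: lt0r_neq0.
  have : enorm (a - b) / n%:R < eps * enorm w.
    by rewrite ltr_pdivrMr // mulrC -ltr_pdivrMr ?mulr_gt0.
  have : 0 <= enorm (a - b) / n%:R by rewrite divr_ge0 ?enorm_ge0 // ltW.
  nra.
have bound : \sum_(0 <= i < n) (F i.+1 - F i)
    <= \sum_(0 <= i < n) (rho * ((1 - eps) * enorm (a - b)) * enorm w / n%:R).
  by apply: ler_sum_nat => i /andP[_ lt_in]; exact: F_piece.
rewrite telescope_sumr // sumr_const_nat subn0 -[_ *+ n]mulr_natr divfK ?lt0r_neq0 // in bound.
by move: bound; rewrite /F divff ?lt0r_neq0 // mul0r.
Qed.

End Pulled.

(* The pulled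
   endpoints are eps-close to a and b, and eps can be taken arbitrarily small. *)
Lemma step_contraction a b p q : X a -> X b -> X p -> X q ->
  dotv (p - q) ((a - b) - alpha *: (g a - g b))
    <= rho * enorm (a - b) * enorm (p - q).
Proof.
move=> Xa Xb Xp Xq.
have [w0|wn0] := eqVneq (enorm (p - q)) 0.
  by rewrite w0 mulr0 (enorm_eq0 w0) dotvC dotv0r.
have wpos : 0 < enorm (p - q) by rewrite lt_def wn0 enorm_ge0.
set m := (1/2) *: (p + q).
set K := enorm (p - q) * (1 + alpha * L) * (enorm (a - m) + enorm (m - b)).
apply: (@le_of_le_add_eps _ _ _ K) => eps eps01; have /andP[e0 e1] := eps01.
have pulled := pulled_contraction Xp Xq Xa Xb wpos eps01.
rewrite -/m in pulled.
set a' := (1 - eps) *: (1 *: (a - b) + b) + eps *: m in pulled.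
set b' := (1 - eps) *: (0 *: (a - b) + b) + eps *: m in pulled.
have Xa' : X a' by apply: pull_in; rewrite ?ler01 ?lexx.
have Xb' : X b' by apply: pull_in; rewrite ?ler01 ?lexx.
have near_a := step_dot_lipschitz (p - q) Xa Xa'.
have near_b := step_dot_lipschitz (p - q) Xb' Xb.
rewrite -!step_dot_sub in near_a near_b.
rewrite (_ : a - a' = eps *: (a - m)) in near_a; last first.
  by apply/matrixP => i j; rewrite !mxE; ring.
rewrite (_ : b' - b = eps *: (m - b)) in near_b; last first.
  by apply/matrixP => i j; rewrite !mxE; ring.
rewrite enormZ gtr0_norm // in near_a; rewrite enormZ gtr0_norm // in near_b.
rewrite -step_dot_sub.
have shrink : rho * ((1 - eps) * enorm (a - b)) * enorm (p - q)
    <= rho * enorm (a - b) * enorm (p - q).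
  apply: ler_wpM2r; first exact: enorm_ge0.
  apply: ler_wpM2l; first exact: rho_ge0.
  by apply: ler_piMl; [exact: enorm_ge0 | lra].
have eK : enorm (p - q) * ((1 + alpha * L) * (eps * enorm (a - m)))
    + enorm (p - q) * ((1 + alpha * L) * (eps * enorm (m - b))) = eps * K.
  by rewrite /K; ring.
move: pulled near_a near_b shrink eK.
move: (dotv (p - q) (step a)) (dotv (p - q) (step b)) => sa sb.
move: (dotv (p - q) (step a')) (dotv (p - q) (step b')) => sa' sb'.
lra.
Qed.

End Contraction.

(* Firm nonexpansiveness of the projection (xs is itself the projection of
   xs - alpha g xs) combined with [step_contraction] tested on xnew - xs. *)
Lemma one_step_bound (R : realType) (M : nat) (gam L alpha : R)
    (X C : set 'rV[R]_M) (f : 'rV[R]_M -> R) (g : 'rV[R]_M -> 'rV[R]_M)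
    (xprev xs xnew ee : 'rV[R]_M) :
  0 < gam -> gam <= L -> 0 < alpha -> convexS X -> convexS C -> C `<=` X ->
  is_gradient f g -> L_smooth_on X g L -> strongly_convex_on X f g gam ->
  is_argmin C f xs -> X xprev ->
  is_proj C (xprev - alpha *: (g xprev + ee)) xnew ->
  enorm (xnew - xs) <= Num.max `|1 - alpha * gam| `|1 - alpha * L|
    * enorm (xprev - xs) + alpha * enorm ee.
Proof.
move=> gam0 gamL alpha0 cX cC CX gf Ls SC am Xprev pr.
have L0 : 0 <= L by apply: le_trans (ltW gam0) gamL.
have Cnew : C xnew by case: pr.
have Cs : C xs by case: am.
have vi_proj := proj_variational cC pr Cs.
have vi_min : 0 <= dotv (xs - (xs - alpha *: g xs)) (xnew - xs).
  rewrite opprB addrC subrK dotvZl mulr_ge0 ?(ltW alpha0) //.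
  exact: (argmin_variational cX gf Ls L0 cC CX am Cnew).
have firm := firm_nonexpansive vi_proj vi_min.
rewrite (_ : _ - (xs - _) = (xprev - xs - alpha *: (g xprev - g xs)) - alpha *: ee)
  in firm; last by apply/matrixP => i j; rewrite !mxE; ring.
rewrite -enorm_sq dotvBl dotvZl in firm.

have contr := step_contraction cX gf Ls SC alpha0 Xprev
  (CX _ Cs) (CX _ Cnew) (CX _ Cs).
rewrite dotvC in contr.
have err : - (alpha * dotv ee (xnew - xs)) <= alpha * (enorm ee * enorm (xnew - xs)).
  rewrite -mulrN ler_wpM2l ?(ltW alpha0) // -dotvNl.
  by apply: le_trans (cauchy_schwarz _ _) _; rewrite enormN.
set rho := Num.max _ _ in contr *.
set W := enorm (xnew - xs) in firm contr err *.
have W0 : 0 <= W by exact: enorm_ge0.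
have [->|Wn0] := eqVneq W 0.
  by rewrite addr_ge0 // mulr_ge0 ?enorm_ge0 ?(ltW alpha0) // le_max normr_ge0.
rewrite -(ler_pM2r (_ : 0 < W)) ?lt_def ?Wn0 //.
move: firm contr err; rewrite expr2 mulrDl.
move: (dotv _ _) (dotv ee _) => P Q; lra.
Qed.

Lemma step_factor_lt1 (R : realFieldType) (gam L alpha : R) :
  0 < gam -> gam <= L -> 0 < alpha -> alpha < 2 / L ->
  Num.max `|1 - alpha * gam| `|1 - alpha * L| < 1.
Proof.
move=> gam0 gamL alpha0 alpha2.
have aL : alpha * L < 2 by rewrite -ltr_pdivlMr // (lt_le_trans gam0 gamL).
have ag : alpha * gam <= alpha * L by rewrite ler_wpM2l // ltW.
have ag0 : 0 < alpha * gam by rewrite mulr_gt0.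
by rewrite gt_max !ltr_norml; apply/andP; split; apply/andP; split; lra.
Qed.

Lemma sum_linear_recursion (R : realFieldType) (D a : nat -> R) (rho : R) (T : nat) :
  0 <= rho -> rho < 1 -> (forall t, 0 <= D t) ->
  (forall t, D t.+1 <= rho * D t + a t.+1) ->
  \sum_(1 <= t < T.+1) D t
    <= (1 - rho)^-1 * (rho * D 0%N + \sum_(1 <= t < T.+1) a t).
Proof.
move=> rho0 rho1 D0 rec.
have step_sum : \sum_(1 <= t < T.+1) D t
    <= rho * \sum_(0 <= t < T) D t + \sum_(1 <= t < T.+1) a t.
  rewrite !big_add1 /= mulr_sumr -big_split /=.
  by apply: ler_sum_nat => t _; exact: rec.
have shift : \sum_(0 <= t < T) D t + D T = D 0%N + \sum_(1 <= t < T.+1) D t.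
  by rewrite -big_nat_recr // big_nat_recl // big_add1.
rewrite ler_pdivlMl ?subr_gt0 //.
have := mulr_ge0 rho0 (D0 T).
move: step_sum shift; rewrite !mulrBl mul1r.
move: (\sum_(1 <= t < T.+1) D t) (\sum_(0 <= t < T) D t) => S S'.
move=> h1 h2 h3; nra.
Qed.

Unset Implicit Arguments. Set Strict Implicit.

Theorem corollary1 (R : realType) (M : nat) (gam L alpha : R)
  (X : set 'rV[R]_M) (Xt : nat -> set 'rV[R]_M)
  (f : nat -> 'rV[R]_M -> R) (g : nat -> 'rV[R]_M -> 'rV[R]_M)
  (xstar x e : nat -> 'rV[R]_M) :
  0 < gam -> gam <= L -> 0 < alpha -> alpha < 2 / L ->
  X !=set0 -> closed X -> convexS X ->
  (forall t, Xt t !=set0 /\ closed (Xt t) /\ convexS (Xt t) /\ Xt t `<=` X) ->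
  (forall t, is_gradient (f t) (g t)) ->
  (forall t, L_smooth_on X (g t) L) ->
  (forall t, strongly_convex_on X (f t) (g t) gam) ->
  (forall t, is_argmin (Xt t) (f t) (xstar t)) ->
  Xt 0%N (x 0%N) ->
  (forall t, is_proj (Xt t.+1) (x t - alpha *: (g t.+1 (x t) + e t.+1)) (x t.+1)) ->
  let rho := Num.max `|1 - alpha * gam| `|1 - alpha * L| in
  forall T : nat, (1 <= T)%N ->
  let omega := \sum_(1 <= t < T.+1) enorm (xstar t.-1 - xstar t) in
  let E := \sum_(1 <= t < T.+1) enorm (e t) in
  \sum_(1 <= t < T.+1) enorm (x t - xstar t)
    <= (1 - rho)^-1 * (rho * enorm (x 0%N - xstar 0%N) + rho * omega + alpha * E).
Proof.
move=> gam0 gamL alpha0 alpha2 _ _ cX sets gf Ls SC am x0 pr rho T _ /=.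
have rho0 : 0 <= rho by rewrite le_max normr_ge0.
have rho1 : rho < 1 by exact: step_factor_lt1.
have Xx t : Xt t (x t) by case: t => [|t] //; case: (pr t).
(* one step, then the triangle inequality through the previous minimizer *)
have track t : enorm (x t.+1 - xstar t.+1) <= rho * enorm (x t - xstar t)
    + (rho * enorm (xstar t - xstar t.+1) + alpha * enorm (e t.+1)).
  have [_ [_ [cC CX]]] := sets t.+1; have [_ [_ [_ CXt]]] := sets t.
  apply: le_trans (one_step_bound gam0 gamL alpha0 cX cC CX (gf t.+1) (Ls t.+1)
    (SC t.+1) (am t.+1) (CXt _ (Xx t)) (pr t)) _.
  have := ler_wpM2l rho0 (enorm_triangle (x t) (xstar t) (xstar t.+1)).
  by rewrite -/rho mulrDr; lra.
have := sum_linear_recursion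
  (a := fun t => rho * enorm (xstar t.-1 - xstar t) + alpha * enorm (e t))
  T rho0 rho1 (fun t => enorm_ge0 _) track.
by rewrite big_split /= -!mulr_sumr addrA.
Qed.
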